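(* In the two-graph Moran process: (i) there is a pair of graph families $G_R,G_M$ (one pair on $n$ vertices for each $n$) such that, for constant relative fitness $r$, the fixation probability $f_{G_R,G_M}$ is $o(a^{-n})$ for some constant $a>1$; (ii) there is a pair of graph families $G_R',G_M'$ such that, for every constant $r>0$, the fixation probability $f_{G_R',G_M'}$ is at least $1-O(1/n)$.
   Context: Two-graph Moran process: vertex set $V=\{1,\dots,n\}$; resident graph $G_R=(V,E_R)$ and mutant graph $G_M=(V,E_M)$, strongly connected, with row-stochastic weight matrices $W_R=[w^R_{ij}]$, $W_M=[w^M_{ij}]$ ($w^R_{ij}>0$ iff $(i,j)\in E_R$, similarly for $M$). The state is the mutant set $S$; residents have fitness $1$, mutants fitness $r>0$. Each step a vertex $i$ is chosen with probability proportional to fitness; if $i$ is a mutant, it picks $j$ with probability $w^M_{ij}$ and $j$ becomes a mutant; if a resident, it picks $j$ with probability $w^R_{ij}$ and $j$ becomes a resident. Absorption at $S=\emptyset$ or $S=V$ (fixation). The fixation probability is the probability of fixation when starting with one mutant at a uniformly random vertex. Asymptotic notation is with respect to $n\to\infty$. *)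

From HB Require Import structures.
From mathcomp Require Import all_boot all_order all_algebra.
From mathcomp Require Import all_classical all_reals all_analysis.
Set Implicit Arguments. Unset Strict Implicit. Unset Printing Implicit Defensive.
Import Order.TTheory GRing.Theory Num.Theory numFieldNormedType.Exports.
Local Open Scope ring_scope.

(* A weighted directed graph on V = 'I_n is given by its weight matrix W:
   the edge set is {(i,j) | 0 < W i j}. *)
Definition edge_rel (R : realType) (n : nat) (W : 'M[R]_n) : rel 'I_n :=
  fun i j => 0 < W i j.

Definition valid_graph (R : realType) (n : nat) (W : 'M[R]_n) : Prop :=
  (forall i j, 0 <= W i j) /\
  (forall i, \sum_j W i j = 1) /\
  (forall i j, connect (edge_rel W) i j).

(* Fitness of vertex i in state S (S = set of mutants). *)
Definition fitness (R : realType) (n : nat) (r : R) (S : {set 'I_n}) (i : 'I_n) : R :=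
  if i \in S then r else 1.

Definition total_fitness (R : realType) (n : nat) (r : R) (S : {set 'I_n}) : R :=
  \sum_i fitness r S i.

(* Next state when i is chosen for reproduction and j is the target. *)
Definition next_state (n : nat) (S : {set 'I_n}) (i j : 'I_n) : {set 'I_n} :=
  if i \in S then j |: S else S :\ j.

Definition trans_prob (R : realType) (n : nat) (WR WM : 'M[R]_n) (r : R)
  (S T : {set 'I_n}) : R :=
  \sum_i \sum_j (fitness r S i / total_fitness r S) *
                (if i \in S then WM i j else WR i j) *
                (next_state S i j == T)%:R.

Fixpoint full_at (R : realType) (n : nat) (WR WM : 'M[R]_n) (r : R) (t : nat)
  (S : {set 'I_n}) : R :=
  match t with
  | 0 => (S == [set: 'I_n])%:R
  | t'.+1 => \sum_T trans_prob WR WM r S T * full_at WR WM r t' T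
  end.

(* Absorption probability at V (fixation), started from S: since V is absorbing,
   the probability of having fixated by time t is nondecreasing in t, and the
   fixation probability is its limit. *)
Definition fixation_from (R : realType) (n : nat) (WR WM : 'M[R]_n) (r : R)
  (S : {set 'I_n}) : R :=
  limn (fun t => full_at WR WM r t S).

Definition fixation_prob (R : realType) (n : nat) (WR WM : 'M[R]_n) (r : R) : R :=
  (n%:R)^-1 * \sum_i fixation_from WR WM r [set i].

From HB Require Import structures.
From mathcomp Require Import all_boot all_order all_algebra.
From mathcomp Require Import all_classical all_reals all_analysis.
From mathcomp Require Import ring lra zify.
Import Order.TTheory GRing.Theory Num.Theory numFieldNormedType.Exports.
Set Implicit Arguments. Unset Strict Implicit. Unset Printing Implicit Defensive.

(** Both constructions use complete graphs in which every edge has weight [b]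
   and every vertex has an extra self-loop of weight [a], with [a + b n = 1].
   On such graphs a mutant birth adds a mutant with probability [b (n - k)]
   and a resident birth removes one with probability [b k], where [k] is the
   number of mutants, so [x ^ k] changes in expectation by the factor
   [1 + k (n - k) D(x) / F] with [F] the total fitness and
   [D(x) = (x - 1) r b_M + (x^-1 - 1) b_R].
   In (i) residents use the uniform complete graph and mutants keep almost
   all of their weight on the self-loop; for [n >= 4 r] we get [D(4) <= 0], so
   [4 ^ k] is a supermartingale and fixation from one mutant has probability
   at most [4 ^ (1 - n)].  In (ii) the roles are exchanged: [(r n) ^ -k] is a
   martingale, which bounds extinction by [1 / (r n)], and [D(1/2) < 0] makes
   [2 ^ (n - k)] contract by a fixed factor away from the absorbing states,
   so the process is absorbed almost surely. *)

Local Open Scope ring_scope.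

Lemma total_fitnessE (R : realType) n (r : R) (S : {set 'I_n}) :
  total_fitness r S = r * #|S|%:R + #|~: S|%:R.
Proof.
rewrite /total_fitness (bigID (mem S)) /=.
rewrite (eq_bigr (fun _ => r)); last by move=> i iS; rewrite /fitness iS.
rewrite [X in _ + X](eq_bigr (fun _ => 1)); last first.
  by move=> i /negbTE iS; rewrite /fitness iS.
rewrite !sumr_const mulr_natr; congr (_ + _).
by apply/congr1/eq_card => i; rewrite !inE.
Qed.

Lemma total_fitness_gt0 (R : realType) n (r : R) (S : {set 'I_n}) :
  0 < r -> (0 < n)%N -> 0 < total_fitness r S.
Proof.
move=> r_gt0 n_gt0; rewrite total_fitnessE.
have := cardsC S; rewrite card_ord => kmE.
case: (posnP #|S|) => [S0|S_gt0].
  by rewrite S0 mulr0 add0r ltr0n; lia.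
by rewrite ltr_wpDr // mulr_gt0 // ltr0n.
Qed.

Definition superharmonic (R : realType) n (WR WM : 'M[R]_n) (r : R)
    (phi : {set 'I_n} -> R) :=
  forall S, \sum_T trans_prob WR WM r S T * phi T <= phi S.

Section TwoGraphChain.
Variables (R : realType) (n : nat) (WR WM : 'M[R]_n) (r : R).
Local Notation P := (trans_prob WR WM r).
Local Notation full := [set: 'I_n]%SET.

Lemma sum_trans_probE S (g : {set 'I_n} -> R) :
  \sum_T P S T * g T =
  \sum_i fitness r S i / total_fitness r S *
    \sum_j (if i \in S then WM i j else WR i j) * g (next_state S i j).
Proof.
rewrite /trans_prob; under eq_bigr do rewrite big_distrl /=.
rewrite exchange_big /=; apply: eq_bigr => i _.
rewrite big_distrr /=; under eq_bigr do rewrite big_distrl /=.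
rewrite exchange_big /=; apply: eq_bigr => j _.
rewrite (bigD1 (next_state S i j)) //= eqxx mulr1 big1 ?addr0 ?mulrA //.
by move=> T /negbTE; rewrite eq_sym => ->; rewrite mulr0 mul0r.
Qed.

Hypotheses (WR_ge0 : forall i j, 0 <= WR i j) (WM_ge0 : forall i j, 0 <= WM i j).
Hypotheses (WR_sum1 : forall i, \sum_j WR i j = 1) (WM_sum1 : forall i, \sum_j WM i j = 1).
Hypotheses (r_gt0 : 0 < r) (n_gt0 : (0 < n)%N).

Lemma trans_prob_ge0 S T : 0 <= P S T.
Proof.
apply: sumr_ge0 => i _; apply: sumr_ge0 => j _.
rewrite !mulr_ge0 ?ler0n ?invr_ge0 ?(ltW (total_fitness_gt0 _ _ _)) //.
  by rewrite /fitness; case: ifP => _; rewrite ?ler01 ?ltW.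
by case: ifP.
Qed.

Lemma sum_trans_prob_next_const S (g : {set 'I_n} -> R) c :
  (forall i j, g (next_state S i j) = c) -> \sum_T P S T * g T = c.
Proof.
move=> gE; rewrite sum_trans_probE -[RHS]mul1r.
have <- : \sum_i fitness r S i / total_fitness r S = 1.
  by rewrite -mulr_suml mulfV // gt_eqF // total_fitness_gt0.
rewrite mulr_suml; apply: eq_bigr => i _; congr (_ * _).
under eq_bigr do rewrite gE.
by rewrite -big_distrl /=; case: (i \in S); rewrite ?WR_sum1 ?WM_sum1 mul1r.
Qed.

Lemma sum_trans_prob_const S c : \sum_T P S T * c = c.
Proof. exact: sum_trans_prob_next_const. Qed.

Lemma sum_trans_prob_setT (g : {set 'I_n} -> R) : \sum_T P full T * g T = g full.
Proof. by apply: sum_trans_prob_next_const => i j; rewrite /next_state inE finset.setUT. Qed.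

Lemma full_at_ge0 t S : 0 <= full_at WR WM r t S.
Proof.
elim: t S => [|t IH] S /=; first exact: ler0n.
by apply: sumr_ge0 => T _; rewrite mulr_ge0 ?trans_prob_ge0.
Qed.

Lemma full_at_le1 t S : full_at WR WM r t S <= 1.
Proof.
elim: t S => [|t IH] S /=; first by case: (S == _).
rewrite -[X in _ <= X](sum_trans_prob_const S 1); apply: ler_sum => T _.
by rewrite ler_wpM2l ?trans_prob_ge0.
Qed.

Lemma full_at_setT t : full_at WR WM r t full = 1.
Proof. by elim: t => [|t IH] /=; rewrite ?eqxx // sum_trans_prob_setT IH. Qed.

Lemma full_at_nondecreasing S : nondecreasing_seq (full_at WR WM r ^~ S).
Proof.
apply/nondecreasing_seqP => t; elim: t S => [|t IH] S.
  rewrite [X in X <= _]/=; case: eqP => [->|_]; first by rewrite full_at_setT.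
  exact: full_at_ge0.
by apply: ler_sum => T _; rewrite ler_wpM2l ?trans_prob_ge0.
Qed.

Lemma full_at_cvg S : cvgn (full_at WR WM r ^~ S).
Proof.
apply: nondecreasing_is_cvgn; first exact: full_at_nondecreasing.
by exists 1 => _ [t _ <-]; exact: full_at_le1.
Qed.

Lemma full_at_le_fixation_from t S : full_at WR WM r t S <= fixation_from WR WM r S.
Proof. exact: (nondecreasing_cvgn_le (@full_at_nondecreasing S) (@full_at_cvg S) t). Qed.

Lemma fixation_from_ge0 S : 0 <= fixation_from WR WM r S.
Proof. exact: le_trans (full_at_ge0 0 S) (full_at_le_fixation_from 0 S). Qed.

Lemma fixation_from_le_superharmonic (phi : {set 'I_n} -> R) :
  (forall S, 0 <= phi S) -> 0 < phi full -> superharmonic WR WM r phi ->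
  forall S, fixation_from WR WM r S <= phi S / phi full.
Proof.
move=> phi_ge0 phi_full_gt0 phi_sup S.
have full_at_le t S' : full_at WR WM r t S' * phi full <= phi S'.
  elim: t S' => [|t IH] S' /=; first by case: eqP => [->|_]; rewrite ?mul1r ?mul0r.
  apply: le_trans (phi_sup S'); rewrite mulr_suml; apply: ler_sum => T _.
  by rewrite -mulrA ler_wpM2l ?trans_prob_ge0.
apply: limr_le; first exact: full_at_cvg.
by apply: nearW => t; rewrite ler_pdivlMr.
Qed.

(* [phi] bounds the probability of extinction and [psi] the probability of
   not being absorbed yet, which decays geometrically. *)
Lemma not_full_at_le (phi psi : {set 'I_n} -> R) (lam : R) :
  (forall S, 0 <= phi S) -> 1 <= phi finset.set0 -> superharmonic WR WM r phi ->
  (forall S, 1 <= psi S) -> 0 <= lam ->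
  (forall S, S != finset.set0 -> S != full ->
     \sum_T P S T * psi T <= lam * psi S) ->
  forall t S, 1 - full_at WR WM r t S <= phi S + lam ^+ t * psi S.
Proof.
move=> phi_ge0 phi0_ge1 phi_sup psi_ge1 lam_ge0 psi_contr.
have rhs_ge0 t S : 0 <= phi S + lam ^+ t * psi S.
  by rewrite addr_ge0 ?mulr_ge0 ?exprn_ge0 // (le_trans ler01 (psi_ge1 _)).
elim=> [|t IH] S.
  rewrite /=; case: eqP => [->|_]; first by rewrite subrr rhs_ge0.
  by rewrite subr0 expr0 mul1r (le_trans (psi_ge1 S)) // lerDr.
have [->|S_full] := eqVneq S full; first by rewrite full_at_setT subrr rhs_ge0.
have [->|S_nonempty] := eqVneq S finset.set0.
  have := full_at_ge0 t.+1 finset.set0.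
  have : 0 <= lam ^+ t.+1 * psi finset.set0.
    by rewrite mulr_ge0 ?exprn_ge0 // (le_trans ler01 (psi_ge1 _)).
  lra.
have -> : 1 - full_at WR WM r t.+1 S = \sum_T P S T * (1 - full_at WR WM r t T).
  rewrite /= -{1}(sum_trans_prob_const S 1) -sumrB; apply: eq_bigr => T _.
  by rewrite mulrBr mulr1.
apply: le_trans (_ : \sum_T P S T * (phi T + lam ^+ t * psi T) <= _).
  by apply: ler_sum => T _; rewrite ler_wpM2l ?trans_prob_ge0.
under eq_bigr do rewrite mulrDr mulrCA.
rewrite big_split /= -big_distrr /= exprSr -mulrA.
by rewrite lerD ?ler_wpM2l ?exprn_ge0 ?psi_contr.
Qed.

Lemma fixation_from_ge_superharmonic (phi psi : {set 'I_n} -> R) (lam : R) :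
  (forall S, 0 <= phi S) -> 1 <= phi finset.set0 -> superharmonic WR WM r phi ->
  (forall S, 1 <= psi S) -> 0 <= lam -> lam < 1 ->
  (forall S, S != finset.set0 -> S != full ->
     \sum_T P S T * psi T <= lam * psi S) ->
  forall S, 1 - phi S <= fixation_from WR WM r S.
Proof.
move=> phi_ge0 phi0_ge1 phi_sup psi_ge1 lam_ge0 lam_lt1 psi_contr S.
apply/ler_addgt0Pr => d d_gt0.
have psi_gt0 : 0 < psi S by apply: lt_le_trans ltr01 _.
have lam_norm : `|lam| < 1 by rewrite ger0_norm.
have [N _ lamN] := cvgr0_norm_le _ (cvg_expr lam_norm) _ (divr_gt0 d_gt0 psi_gt0).
have := lamN N (leqnn N); rewrite /= ger0_norm ?exprn_ge0 // ler_pdivlMr // => decay.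
have := not_full_at_le phi_ge0 phi0_ge1 phi_sup psi_ge1 lam_ge0 psi_contr N S.
have := full_at_le_fixation_from N S; lra.
Qed.

End TwoGraphChain.

Lemma fixation_prob_ge (R : realType) n (WR WM : 'M[R]_n) (r lo : R) : (0 < n)%N ->
  (forall i, lo <= fixation_from WR WM r [set i]) -> lo <= fixation_prob WR WM r.
Proof.
move=> n_gt0 lo_le; rewrite /fixation_prob ler_pdivlMl ?ltr0n //.
have -> : n%:R * lo = \sum_(i < n) lo by rewrite sumr_const card_ord mulr_natl.
exact: ler_sum.
Qed.

Lemma fixation_prob_le (R : realType) n (WR WM : 'M[R]_n) (r hi : R) : (0 < n)%N ->
  (forall i, fixation_from WR WM r [set i] <= hi) -> fixation_prob WR WM r <= hi.
Proof.
move=> n_gt0 le_hi; rewrite /fixation_prob ler_pdivrMl ?ltr0n //.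
have -> : n%:R * hi = \sum_(i < n) hi by rewrite sumr_const card_ord mulr_natl.
exact: ler_sum.
Qed.

Definition lazy_complete (R : realType) n (a b : R) : 'M[R]_n :=
  \matrix_(i, j) (a * (i == j)%:R + b).

Lemma lazy_complete_gt0 (R : realType) n (a b : R) i j :
  0 <= a -> 0 < b -> 0 < lazy_complete n a b i j.
Proof. by move=> a_ge0 b_gt0; rewrite mxE ltr_wpDl // mulr_ge0. Qed.

Lemma sum_lazy_complete_in (R : realType) n (a b : R) (A : {pred 'I_n}) i :
  \sum_(j in A) lazy_complete n a b i j = (if i \in A then a else 0) + b * #|A|%:R.
Proof.
under eq_bigr do rewrite mxE.
rewrite big_split /= sumr_const mulr_natr; congr (_ + _).
case: ifPn => iA; last first.
  rewrite big1 // => j jA; case: eqP => [ij|]; last by rewrite mulr0.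
  by move: iA; rewrite ij jA.
rewrite (bigD1 i) //= eqxx mulr1 big1 ?addr0 // => j /andP[_ ji].
by rewrite eq_sym (negbTE ji) mulr0.
Qed.

Lemma sum_lazy_complete (R : realType) n (a b : R) i :
  \sum_j lazy_complete n a b i j = a + b * n%:R.
Proof. by have := sum_lazy_complete_in a b predT i; rewrite card_ord. Qed.

Section LazyCompleteRow.
Variables (R : realType) (n : nat) (a b x : R) (S : {set 'I_n}).
Hypothesis row_sum1 : a + b * n%:R = 1.

Let a_eq : a = 1 - b * (#|S| + #|~: S|)%N%:R.
Proof. by apply/eqP; rewrite cardsC card_ord eq_sym subr_eq row_sum1. Qed.

Lemma sum_lazy_complete_pow_card_setU1 i : i \in S ->
  \sum_j lazy_complete n a b i j * x ^+ #|j |: S| =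
  x ^+ #|S| * (1 + (x - 1) * b * #|~: S|%:R).
Proof.
move=> iS.
have cardU1 j : x ^+ #|j |: S| = x ^+ #|S| * (if j \in S then 1 else x).
  by rewrite cardsU1; case: (j \in S); rewrite ?add0n ?mulr1 // add1n exprSr.
under eq_bigr do rewrite cardU1.
rewrite (bigID (mem S)) /=.
under eq_bigr => j jS do rewrite jS mulr1.
under [X in _ + X]eq_bigr => j /negbTE jS do rewrite jS.
rewrite -!big_distrl /= (eq_bigl (mem (~: S)) _ (fun j => esym (finset.in_setC j S))).
rewrite !sum_lazy_complete_in inE iS /= add0r.
by rewrite a_eq natrD; ring.
Qed.

Lemma sum_lazy_complete_pow_card_setD1 i : x != 0 -> i \notin S ->
  \sum_j lazy_complete n a b i j * x ^+ #|S :\ j| =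
  x ^+ #|S| * (1 + (x^-1 - 1) * b * #|S|%:R).
Proof.
move=> x_neq0 iS.
have cardD1 j : x ^+ #|S :\ j| = x ^+ #|S| * (if j \in S then x^-1 else 1).
  rewrite [in RHS](cardsD1 j S); case: (j \in S); last by rewrite add0n mulr1.
  by rewrite add1n exprS [x * _]mulrC mulfK.
under eq_bigr do rewrite cardD1.
rewrite (bigID (mem S)) /=.
under eq_bigr => j jS do rewrite jS.
under [X in _ + X]eq_bigr => j /negbTE jS do rewrite jS mulr1.
rewrite -!big_distrl /= (eq_bigl (mem (~: S)) _ (fun j => esym (finset.in_setC j S))).
rewrite !sum_lazy_complete_in inE (negbTE iS) /= add0r.
by rewrite a_eq natrD; field.
Qed.
End LazyCompleteRow.

Definition pow_card_drift (R : realType) (r bR bM x : R) :=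
  (x - 1) * r * bM + (x^-1 - 1) * bR.

Section LazyCompleteDrift.
Variables (R : realType) (n : nat) (aR bR aM bM r : R).
Hypotheses (rowR : aR + bR * n%:R = 1) (rowM : aM + bM * n%:R = 1).
Hypotheses (r_gt0 : 0 < r) (n_gt0 : (0 < n)%N).
Local Notation P := (trans_prob (lazy_complete n aR bR) (lazy_complete n aM bM) r).

Lemma sum_trans_prob_pow_card S x : x != 0 ->
  \sum_T P S T * x ^+ #|T| =
  x ^+ #|S| * (1 + #|S|%:R * #|~: S|%:R * pow_card_drift r bR bM x / total_fitness r S).
Proof.
move=> x_neq0; rewrite sum_trans_probE (bigID (mem S)) /=.
under eq_bigr => i iS do
  rewrite /fitness /next_state iS sum_lazy_complete_pow_card_setU1 //.
under [X in _ + X]eq_bigr => i iS do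
  rewrite /fitness /next_state (negbTE iS) sum_lazy_complete_pow_card_setD1 //.
rewrite !sumr_const.
have -> : #|[pred i | i \notin S]| = #|~: S| by apply: eq_card => i; rewrite !inE.
rewrite -[_ *+ #|S|]mulr_natr -[_ *+ #|~: S|]mulr_natr.
have := gt_eqF (total_fitness_gt0 S r_gt0 n_gt0).
rewrite /pow_card_drift total_fitnessE => F_neq0.
by field; rewrite F_neq0 x_neq0.
Qed.

Lemma pow_card_superharmonic x : 0 < x -> pow_card_drift r bR bM x <= 0 ->
  superharmonic (lazy_complete n aR bR) (lazy_complete n aM bM) r (fun S => x ^+ #|S|).
Proof.
move=> x_gt0 drift_le0 S; rewrite sum_trans_prob_pow_card ?gt_eqF //.
apply: ler_piMr; first by rewrite exprn_ge0 ?ltW.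
rewrite gerDl; apply: mulr_le0_ge0.
  by rewrite mulr_ge0_le0 ?mulr_ge0 ?ler0n.
by rewrite invr_ge0 ltW ?total_fitness_gt0.
Qed.

Lemma pow_card_contraction x S : 0 < x -> pow_card_drift r bR bM x <= 0 ->
  S != finset.set0 -> S != [set: 'I_n]%SET ->
  \sum_T P S T * x ^+ #|T| <=
  (1 + pow_card_drift r bR bM x / ((r + 1) * n%:R)) * x ^+ #|S|.
Proof.
move=> x_gt0 drift_le0 S_neq0 S_neqT.
rewrite sum_trans_prob_pow_card ?gt_eqF // [X in _ <= X]mulrC.
apply: ler_wpM2l; first by rewrite exprn_ge0 ?ltW.
rewrite lerD2l.
have kmE := cardsC S; rewrite card_ord in kmE.
have k_gt0 : (0 < #|S|)%N by rewrite card_gt0.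
have : (#|S| < #|[set: 'I_n]%SET|)%N by rewrite proper_card // properT.
rewrite cardsT card_ord => k_lt_n.
have km_ge1 : 1 <= #|S|%:R * #|~: S|%:R :> R by rewrite -natrM ler1n muln_gt0; lia.
have F_gt0 := total_fitness_gt0 S r_gt0 n_gt0.
have F_le : total_fitness r S <= (r + 1) * n%:R.
  by rewrite total_fitnessE mulrDl mul1r lerD ?ler_pM2l // ler_nat; lia.
apply: le_trans (_ : pow_card_drift r bR bM x / total_fitness r S <= _).
  apply: ler_wpM2r; first by rewrite invr_ge0 ltW.
  by rewrite -[X in _ <= X]mul1r; apply: ler_wnM2r.
by rewrite ler_wnM2l // lef_pV2 ?posrE // (lt_le_trans F_gt0).
Qed.
End LazyCompleteDrift.

Lemma lazy_complete_valid (R : realType) n (a b : R) :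
  0 <= a -> 0 < b -> a + b * n%:R = 1 -> valid_graph (lazy_complete n a b).
Proof.
move=> a_ge0 b_gt0 row_sum1; split; first by move=> i j; rewrite ltW ?lazy_complete_gt0.
split; first by move=> i; rewrite sum_lazy_complete.
by move=> i j; apply: connect1; rewrite /edge_rel lazy_complete_gt0.
Qed.

Lemma valid_graph_ord0 (R : realType) (W : 'M[R]_0) : valid_graph W.
Proof. by split; [case | split; case]. Qed.

Definition uniform_mx (R : realType) n : 'M[R]_n := lazy_complete n 0 n%:R^-1.
Definition lazy_mx (R : realType) n : 'M[R]_n := lazy_complete n (1 - n%:R^-1) (n%:R ^- 2).

Lemma uniform_mx_row_sum1 (R : realType) n : (0 < n)%N -> 0 + n%:R^-1 * n%:R = 1 :> R.
Proof. by move=> n_gt0; rewrite add0r mulVf // pnatr_eq0 -lt0n. Qed.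

Lemma lazy_mx_row_sum1 (R : realType) n :
  (0 < n)%N -> 1 - n%:R^-1 + n%:R ^- 2 * n%:R = 1 :> R.
Proof.
move=> n_gt0; have : n%:R != 0 :> R by rewrite pnatr_eq0 -lt0n.
by move: (n%:R) => N N_neq0; field.
Qed.

Lemma uniform_lazy_valid (R : realType) n :
  valid_graph (uniform_mx R n) /\ valid_graph (lazy_mx R n).
Proof.
case: (posnP n) => [-> | n_gt0]; first by split; exact: valid_graph_ord0.
have N_ge1 : 1 <= n%:R :> R by rewrite ler1n.
split; apply: lazy_complete_valid.
- by [].
- by rewrite invr_gt0 (lt_le_trans ltr01).
- exact: uniform_mx_row_sum1.
- by rewrite subr_ge0 invf_le1 // (lt_le_trans ltr01).
- by rewrite invr_gt0 exprn_gt0 // (lt_le_trans ltr01).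
- exact: lazy_mx_row_sum1.
Qed.

Lemma uniform_lazy_drift_le0 (R : realType) (r N : R) :
  0 < N -> 4 * r <= N -> pow_card_drift r N^-1 (N ^- 2) 4 <= 0.
Proof.
move=> N_gt0 N_ge.
have -> : pow_card_drift r N^-1 (N ^- 2) 4 = 3 / 4 * (4 * r - N) / N ^+ 2.
  by rewrite /pow_card_drift; field; rewrite gt_eqF.
apply: mulr_le0_ge0; last by rewrite invr_ge0 exprn_ge0 // ltW.
by rewrite mulr_ge0_le0 // subr_le0.
Qed.

Lemma lazy_uniform_drift_eq0 (R : realType) (r N : R) :
  0 < r -> 0 < N -> pow_card_drift r (N ^- 2) N^-1 (r * N)^-1 = 0.
Proof. by move=> r_gt0 N_gt0; rewrite /pow_card_drift; field; rewrite !gt_eqF. Qed.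

Lemma lazy_uniform_drift_half_bounds (R : realType) (r N : R) :
  0 < r -> 1 <= N -> 2 < r * N ->
  - ((r + 1) * N) <= pow_card_drift r (N ^- 2) N^-1 2^-1 < 0.
Proof.
move=> r_gt0 N_ge1 rN_gt2; have N_gt0 : 0 < N by apply: lt_le_trans ltr01 _.
have -> : pow_card_drift r (N ^- 2) N^-1 2^-1 = (2 - r * N) / (2 * N ^+ 2).
  by rewrite /pow_card_drift; field; rewrite gt_eqF.
have D_gt0 : 0 < 2 * N ^+ 2 by rewrite mulr_gt0 ?exprn_gt0.
rewrite pmulr_llt0 ?invr_gt0 // subr_lt0 rN_gt2 andbT ler_pdivlMr //.
have : N <= N * N * N by nra.
nra.
Qed.

Lemma fixation_from_uniform_lazy_le (R : realType) n (r : R) i :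
  0 < r -> 4 * r <= n%:R ->
  fixation_from (uniform_mx R n) (lazy_mx R n) r [set i] <= 4 / 4 ^+ n.
Proof.
move=> r_gt0 n_ge; have n_gt0 : (0 < n)%N := leq_ltn_trans (leq0n i) (ltn_ord i).
have [[R0 [R1 _]] [M0 [M1 _]]] := uniform_lazy_valid R n.
have := fixation_from_le_superharmonic R0 M0 R1 M1 r_gt0 n_gt0 (phi := fun S => 4 ^+ #|S|).
rewrite cardsT card_ord => /(_ _ _ _ [set i]); rewrite cards1 expr1; apply.
- by move=> S; rewrite exprn_ge0.
- by rewrite exprn_gt0.
- apply: (pow_card_superharmonic (uniform_mx_row_sum1 R n_gt0) (lazy_mx_row_sum1 R n_gt0) r_gt0 n_gt0) => //.
  by apply: uniform_lazy_drift_le0; rewrite ?ltr0n.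
Qed.

Lemma fixation_from_lazy_uniform_ge (R : realType) n (r : R) i :
  0 < r -> 2 < r * n%:R ->
  1 - (r * n%:R)^-1 <= fixation_from (lazy_mx R n) (uniform_mx R n) r [set i].
Proof.
move=> r_gt0 rn_gt2; have n_gt0 : (0 < n)%N := leq_ltn_trans (leq0n i) (ltn_ord i).
have [[M0 [M1 _]] [R0 [R1 _]]] := uniform_lazy_valid R n.
have rowR := lazy_mx_row_sum1 R n_gt0; have rowM := uniform_mx_row_sum1 R n_gt0.
have N_ge1 : 1 <= n%:R :> R by rewrite ler1n.
have /andP[d_ge d_lt0] := lazy_uniform_drift_half_bounds r_gt0 N_ge1 rn_gt2.
have G_gt0 : 0 < (r + 1) * n%:R by rewrite mulr_gt0 ?addr_gt0 ?ltr0n.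
set lam := 1 + pow_card_drift r (n%:R ^- 2) n%:R^-1 2^-1 / ((r + 1) * n%:R).
have lam_ge0 : 0 <= lam by rewrite /lam addrC -lerBlDr sub0r ler_pdivlMr // mulN1r.
have lam_lt1 : lam < 1 by rewrite /lam gtrDl pmulr_llt0 ?invr_gt0.
have := fixation_from_ge_superharmonic R0 M0 R1 M1 r_gt0 n_gt0
  (phi := fun S => (r * n%:R)^-1 ^+ #|S|) (psi := fun S => 2 ^+ n * 2^-1 ^+ #|S|).
move=> /(_ lam _ _ _ _ lam_ge0 lam_lt1 _ [set i]); rewrite cards1 expr1; apply.
- by move=> S; rewrite exprn_ge0 // invr_ge0 ltW // mulr_gt0 ?ltr0n.
- by rewrite cards0 expr0.
- apply: (pow_card_superharmonic rowR rowM r_gt0 n_gt0); first by rewrite invr_gt0 mulr_gt0 ?ltr0n.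
  by rewrite lazy_uniform_drift_eq0 ?ltr0n.
- move=> S; rewrite exprVn ler_pdivlMr ?exprn_gt0 // mul1r ler_eXn2l ?ltr1n //.
  by have := max_card S; rewrite card_ord.
- move=> S S_neq0 S_neqT; under eq_bigr do rewrite mulrCA.
  rewrite -big_distrr /= mulrCA; apply: ler_wpM2l; first by rewrite exprn_ge0.
  by apply: (pow_card_contraction rowR rowM r_gt0 n_gt0); rewrite ?invr_gt0 ?ltW.
Qed.

Lemma exp4_inv_le (R : realType) (eps : R) n :
  0 < eps -> 4 / eps <= n%:R -> 4 / 4 ^+ n <= eps * 2 ^- n.
Proof.
move=> eps_gt0 n_ge.
have -> : (4 : R) ^+ n = 2 ^+ n * 2 ^+ n by rewrite -exprMn -natrM.
rewrite invfM mulrA; apply: ler_wpM2r; first by rewrite invr_ge0 exprn_ge0.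
rewrite ler_pdivrMr ?exprn_gt0 // mulrC -ler_pdivrMr //.
apply: le_trans n_ge _; rewrite -natrX ler_nat; exact/ltnW/ltn_expl.
Qed.

Local Open Scope classical_set_scope.

Theorem theorem5 (R : realType) :
  (exists (GR GM : forall n : nat, 'M[R]_n),
      (forall n, valid_graph (GR n) /\ valid_graph (GM n)) /\
      (forall r : R, 0 < r ->
         exists a : R, 1 < a /\
           (forall eps : R, 0 < eps ->
              \forall n \near \oo,
                `|fixation_prob (GR n) (GM n) r| <= eps * `|a ^- n|)))
  /\
  (exists (GR' GM' : forall n : nat, 'M[R]_n),
      (forall n, valid_graph (GR' n) /\ valid_graph (GM' n)) /\
      (forall r : R, 0 < r ->
         exists C : R,
           \forall n \near \oo,
             1 - C / n%:R <= fixation_prob (GR' n) (GM' n) r)).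
Proof.
split.
  exists (uniform_mx R), (lazy_mx R); split; first exact: uniform_lazy_valid.
  move=> r r_gt0; exists 2; split => [|eps eps_gt0]; first by rewrite ltr1n.
  near=> n.
  have n_gt0 : (0 < n)%N by near: n; exact: nbhs_infty_gt.
  have [[R0 [R1 _]] [M0 [M1 _]]] := uniform_lazy_valid R n.
  rewrite ger0_norm; last first.
    by apply: fixation_prob_ge => // i; exact: (fixation_from_ge0 R0 M0 R1 M1 r_gt0 n_gt0).
  rewrite ger0_norm ?invr_ge0 ?exprn_ge0 //; apply: le_trans _ (exp4_inv_le eps_gt0 _).
    apply: fixation_prob_le => // i; apply: fixation_from_uniform_lazy_le => //.
    by near: n; exact: nbhs_infty_ger.
  by near: n; exact: nbhs_infty_ger.
exists (lazy_mx R), (uniform_mx R); split.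
  by move=> n; have [] := uniform_lazy_valid R n.
move=> r r_gt0; exists r^-1; near=> n.
have n_gt0 : (0 < n)%N by near: n; exact: nbhs_infty_gt.
apply: fixation_prob_ge => // i; rewrite -invfM.
apply: fixation_from_lazy_uniform_ge => //.
have n_ge : 2 / r + 1 <= n%:R by near: n; exact: nbhs_infty_ger.
by rewrite -ltr_pdivrMl // mulrC (lt_le_trans _ n_ge) // ltrDl.
Unshelve. all: by end_near.
Qed.
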